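(* Let $G=(V,E,s_0,s_1)$ be a switch graph and $o,d\in V$ with $o\neq d$. Then $\textsc{Run}(G,o,d)$ terminates if and only if there exists an integral solution $\mathbf{x}\in\mathbb{N}_0^E$ satisfying, for all $v\in V$, (a) $\sum_{e\in E^+(v)}x_e-\sum_{e\in E^-(v)}x_e$ equals $1$ if $v=o$, $-1$ if $v=d$, and $0$ otherwise, and (b) $0\le x_{(v,s_1(v))}\le x_{(v,s_0(v))}\le x_{(v,s_1(v))}+1$. In this case, the run profile $\mathbf{x}(G,o,d)$ is the unique integral solution that minimizes $\Sigma(\mathbf{x})=\sum_{e\in E}x_e$ subject to constraints (a) and (b).
   Context: A switch graph is a 4-tuple $G=(V,E,s_0,s_1)$ where $V$ is a finite vertex set, $s_0,s_1:V\to V$, and $E=\{(v,s_0(v)):v\in V\}\cup\{(v,s_1(v)):v\in V\}$ (loops allowed; possibly $s_0(v)=s_1(v)$). For $v\in V$, $E^+(v)$ and $E^-(v)$ denote the outgoing and incoming edges of $v$. The procedure $\textsc{Run}(G,o,d)$: maintain arrays $\mathtt{s\_curr},\mathtt{s\_next}$ indexed by $V$, initially $\mathtt{s\_curr}[v]=s_0(v)$, $\mathtt{s\_next}[v]=s_1(v)$; set $v:=o$; while $v\neq d$: $w:=\mathtt{s\_curr}[v]$, swap $\mathtt{s\_curr}[v],\mathtt{s\_next}[v]$, $v:=w$ (traversing edge $(v,w)$). When the run terminates, its run profile $\mathbf{x}(G,o,d):E\to\mathbb{N}_0$ assigns to each edge the number of times it was traversed. *)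

From mathcomp Require Import all_boot all_order all_algebra.
Unset Printing Implicit Defensive.
Import GRing.Theory Num.Theory.

Section SwitchGraph.
Variables (V : finType) (s0 s1 : V -> V).

(* Edge set E = {(v,s0 v)} U {(v,s1 v)} as a SET of pairs (so if s0 v = s1 v
   there is a single edge). *)
Definition is_edge (e : V * V) : bool := (e.2 == s0 e.1) || (e.2 == s1 e.1).
Definition edge := {e : V * V | is_edge e}.

Lemma edge0_proof v : is_edge (v, s0 v). Proof. by rewrite /is_edge eqxx. Qed.
Lemma edge1_proof v : is_edge (v, s1 v). Proof. by rewrite /is_edge eqxx orbT. Qed.
Definition e0 (v : V) : edge := exist _ (v, s0 v) (edge0_proof v).
Definition e1 (v : V) : edge := exist _ (v, s1 v) (edge1_proof v).

Definition net_out (x : {ffun edge -> nat}) (v : V) : int :=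
  (\sum_(e : edge | (val e).1 == v) x e)%:Z - (\sum_(e : edge | (val e).2 == v) x e)%:Z.

Definition is_solution (o d : V) (x : {ffun edge -> nat}) : Prop :=
  (forall v : V, net_out x v = (if v == o then 1 else if v == d then -1 else 0)%R)
  /\ (forall v : V, x (e1 v) <= x (e0 v) <= (x (e1 v)).+1)%N.

Definition Sigma (x : {ffun edge -> nat}) : nat := \sum_(e : edge) x e.

Definition unique_min_solution (o d : V) (x : {ffun edge -> nat}) : Prop :=
  is_solution o d x /\
  forall y, is_solution o d y -> (Sigma x <= Sigma y)%N /\ (Sigma y = Sigma x -> y = x).

(* Run(G,o,d).  A state is (current vertex, switch bits); bit b v = false means
   s_curr[v] = s0 v, true means s_curr[v] = s1 v. *)
Definition state := (V * {ffun V -> bool})%type.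
Definition curr (b : {ffun V -> bool}) (v : V) : V := if b v then s1 v else s0 v.
Definition flip (b : {ffun V -> bool}) (v : V) : {ffun V -> bool} :=
  [ffun u => if u == v then ~~ b u else b u].

Definition step (d : V) (st : state) : state :=
  let: (v, b) := st in
  if v == d then st else (curr b v, flip b v).

Definition init (o : V) : state := (o, [ffun _ => false]).
Definition state_at (o d : V) (k : nat) : state := iter k (step d) (init o).

Definition run_terminates (o d : V) : Prop := exists n, (state_at o d n).1 = d.

(* number of traversals of each edge during the first n iterations
   (iterations at d are not loop iterations and are not counted) *)
Definition profile (o d : V) (n : nat) : {ffun edge -> nat} :=
  [ffun e : edge => \sum_(k < n)
     let: (v, b) := state_at o d k in
     ((v != d) && ((v, curr b v) == val e) : nat)].

End SwitchGraph.

From Pilot Require Import Defs.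
From mathcomp Require Import all_boot all_order all_algebra.
From mathcomp Require Import zify.

Set Implicit Arguments.
Unset Strict Implicit.

(* The run profile after any number of steps is bounded edgewise by every
   solution x.  Suppose the run at v is about to traverse an edge e already
   used x_e times.  Since the switch at v alternates, condition (b) forces v
   to have already emitted its whole x-outflow, while it has received at most
   its x-inflow; flow conservation of the run and of x then contradict each
   other.  Hence the run stops within Sigma(x) steps, and its final profile,
   being a solution dominated edgewise by every solution, is the unique
   Sigma-minimal one. *)

Lemma sum_andb_eq (T : finType) (P : pred T) (a : T) (c : bool) :
  \sum_(t | P t) ((c && (a == t)) : nat) = c && P a.
Proof.
case: (boolP (P a)) => Pa.
  rewrite (bigD1 a) //= eqxx andbT big1 ?addn0 ?andbT // => t /andP[_ ne].
  by rewrite eq_sym (negbTE ne) andbF.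
rewrite andbF big1 // => t Pt; case: eqP => [at_|]; last by rewrite andbF.
by move: Pa; rewrite at_ Pt.
Qed.

Lemma eq_from_sum_le (T : finType) (f g : T -> nat) :
  (forall t, f t <= g t) -> \sum_t g t = \sum_t f t -> f =1 g.
Proof.
move=> fg sum_eq t.
have /leqif_sum[_] : forall t, xpredT t -> f t <= g t ?= iff (f t == g t).
  by move=> u _; apply/leqif_eq/fg.
by rewrite sum_eq eqxx => /esym/forallP/(_ t)/implyP/(_ isT)/eqP.
Qed.

Section Run.
Variables (V : finType) (s0 s1 : V -> V) (o d : V).
Local Notation edge := (edge V s0 s1).
Local Notation e0 := (e0 V s0 s1).
Local Notation e1 := (e1 V s0 s1).
Local Notation curr := (curr V s0 s1).
Local Notation st k := (state_at V s0 s1 o d k).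
Local Notation pos k := (st k).1.
Local Notation bits k := (st k).2.
Local Notation prof n := (profile V s0 s1 o d n).
Local Notation is_solution := (is_solution V s0 s1 o d).
Local Notation Sigma := (Sigma V s0 s1).

Lemma is_edge_curr b u : is_edge V s0 s1 (u, curr b u).
Proof. by rewrite /is_edge /Defs.curr /=; case: (b u); rewrite eqxx ?orbT. Qed.

Definition curr_edge b u : edge := exist _ (u, curr b u) (is_edge_curr b u).

Lemma e0_eq_e1 v : s0 v = s1 v -> e0 v = e1 v.
Proof. by move=> s01; apply: val_inj => /=; rewrite s01. Qed.

Lemma curr_edge_e0 b v : s0 v = s1 v -> curr_edge b v = e0 v.
Proof. by move=> s01; apply: val_inj => /=; rewrite /Defs.curr; case: (b v); rewrite ?s01. Qed.

Lemma curr_edge_eq_e0 b v : s0 v != s1 v -> (curr_edge b v == e0 v) = ~~ b v.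
Proof.
move=> s01; rewrite -val_eqE /= /Defs.curr; case: (b v); rewrite ?eqxx //=.
by rewrite xpair_eqE eqxx /= eq_sym (negbTE s01).
Qed.

Lemma curr_edge_eq_e1 b v : s0 v != s1 v -> (curr_edge b v == e1 v) = b v.
Proof.
move=> s01; rewrite -val_eqE /= /Defs.curr; case: (b v); rewrite ?eqxx //=.
by rewrite xpair_eqE eqxx /= (negbTE s01).
Qed.

Lemma curr_edge_neq b u (e : edge) : u != (val e).1 -> (curr_edge b u == e) = false.
Proof. by case: e => [[w z] ?] /= uw; rewrite -val_eqE /= xpair_eqE (negbTE uw). Qed.

Lemma out_edge_cases (e : edge) v : (val e).1 == v -> e != e0 v -> e = e1 v.
Proof.
case: e => [[u w] uw] /= /eqP <- ne; apply: val_inj => /=.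
move: (uw); rewrite /is_edge /= => /orP[/eqP w0|/eqP -> //].
by move: ne; rewrite -val_eqE /= w0 eqxx.
Qed.

Lemma sum_out_edges (F : edge -> nat) v :
  \sum_(e | (val e).1 == v) F e = F (e0 v) + (if s0 v == s1 v then 0 else F (e1 v)).
Proof.
rewrite (bigD1 (e0 v)) //=; case: eqP => s01.
  rewrite big1 // => e /andP[ev ne].
  by move: (ne); rewrite (out_edge_cases ev ne) -(e0_eq_e1 s01) eqxx.
rewrite (bigD1 (e1 v)) /=; last first.
  by rewrite eqxx /= -val_eqE /= xpair_eqE eqxx /= eq_sym; apply/eqP.
rewrite big1 ?addn0 // => e /andP[/andP[ev ne] ne1].
by move: ne1; rewrite (out_edge_cases ev ne) eqxx.
Qed.

Lemma flipE b v u : flip V b v u = (if u == v then ~~ b u else b u).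
Proof. by rewrite ffunE. Qed.

Lemma state_atS k : st k.+1 = step V s0 s1 d (st k).
Proof. by rewrite /state_at iterS. Qed.

Lemma state_at_d k : pos k = d -> st k.+1 = st k.
Proof. by rewrite state_atS /step; case: (st k) => v b /= ->; rewrite eqxx. Qed.

Lemma state_at_move k :
  pos k != d -> st k.+1 = (curr (bits k) (pos k), flip V (bits k) (pos k)).
Proof. by rewrite state_atS /step; case: (st k) => v b /= /negbTE ->. Qed.

Lemma pos_d_stays k n : k <= n -> pos k = d -> pos n = d.
Proof.
move=> /subnKC <- dk; elim: (n - k) => [|m IH]; first by rewrite addn0.
by rewrite addnS state_at_d.
Qed.

Lemma profileE n e :
  prof n e = \sum_(k < n) ((pos k != d) && (curr_edge (bits k) (pos k) == e)).
Proof. by rewrite ffunE; apply: eq_bigr => k _; case: (st k). Qed.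

Lemma profileS n e :
  prof n.+1 e = prof n e + ((pos n != d) && (curr_edge (bits n) (pos n) == e)).
Proof. by rewrite !profileE big_ord_recr. Qed.

Definition departures n v := \sum_(k < n) ((pos k != d) && (pos k == v)).
Definition arrivals n v := \sum_(k < n) ((pos k != d) && (curr (bits k) (pos k) == v)).

Lemma profile_out n v : \sum_(e : edge | (val e).1 == v) prof n e = departures n v.
Proof.
under eq_bigr => e _ do rewrite profileE.
by rewrite exchange_big; apply: eq_bigr => k _; rewrite (sum_andb_eq (fun e : edge => _)).
Qed.

Lemma profile_in n v : \sum_(e : edge | (val e).2 == v) prof n e = arrivals n v.
Proof.
under eq_bigr => e _ do rewrite profileE.
by rewrite exchange_big; apply: eq_bigr => k _; rewrite (sum_andb_eq (fun e : edge => _)).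
Qed.

Lemma Sigma_profile n : Sigma (prof n) = \sum_(k < n) (pos k != d).
Proof.
rewrite /Defs.Sigma; under eq_bigr => e _ do rewrite profileE.
by rewrite exchange_big; apply: eq_bigr => k _; rewrite (sum_andb_eq xpredT) andbT.
Qed.

Lemma Sigma_profile_running n : pos n != d -> Sigma (prof n) = n.
Proof.
move=> nd; rewrite Sigma_profile -[RHS]card_ord -sum1_card; apply: eq_bigr => k _.
by case: eqP => // /(pos_d_stays (ltnW (ltn_ord k))) /eqP; rewrite (negbTE nd).
Qed.

Lemma departures_arrivals n v :
  departures n v + (pos n == v) = arrivals n v + (o == v).
Proof.
elim: n => [|n IH]; first by rewrite /departures /arrivals !big_ord0.
rewrite /departures /arrivals !big_ord_recr /= -/(departures n v) -/(arrivals n v).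
case: (eqVneq (pos n) d) => [nd|nd]; first by rewrite -state_atS (state_at_d nd) !addn0.
rewrite -state_atS (state_at_move nd) /=; lia.
Qed.

Lemma profile_switch n v :
  s0 v != s1 v -> prof n (e0 v) = prof n (e1 v) + bits n v.
Proof.
move=> s01; elim: n => [|n IH]; first by rewrite !profileE !big_ord0 /= ffunE.
rewrite !profileS; case: (eqVneq (pos n) d) => [nd|nd].
  by rewrite (state_at_d nd) /= !addn0.
rewrite (state_at_move nd) /= flipE.
case: (eqVneq v (pos n)) => [<-|vn].
  by rewrite curr_edge_eq_e0 // curr_edge_eq_e1 //; move: IH; case: (bits n v) => /= ->; lia.
by rewrite !curr_edge_neq ?addn0 // eq_sym.
Qed.

Lemma profile_solution n : o != d -> pos n = d -> is_solution (prof n).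
Proof.
move=> od nd; split=> v.
  rewrite /net_out profile_out profile_in.
  have := departures_arrivals n v; rewrite nd.
  case: (eqVneq v o) => [->|vo]; first by rewrite eq_sym (negbTE od) => ?; lia.
  by case: (eqVneq v d) => [->|vd] /= ?; lia.
case: (eqVneq (s0 v) (s1 v)) => s01; first by rewrite (e0_eq_e1 s01) leqnn leqnSn.
by rewrite (profile_switch n s01); case: (bits n v) => /=; lia.
Qed.

Section Dominated.
Variable x : {ffun edge -> nat}.
Hypothesis x_sol : is_solution x.

Lemma out_solution_le_departures n :
  prof n (curr_edge (bits n) (pos n)) = x (curr_edge (bits n) (pos n)) ->
  \sum_(e | (val e).1 == pos n) x e <= departures n (pos n).
Proof.
move=> saturated; rewrite -profile_out !sum_out_edges.
case: (eqVneq (s0 (pos n)) (s1 (pos n))) => s01.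
  by rewrite -(curr_edge_e0 (bits n) s01) saturated.
have := profile_switch n s01; have := x_sol.2 (pos n).
move: saturated; case bn: (bits n (pos n)).
- have -> : curr_edge (bits n) (pos n) = e1 (pos n).
    by apply/eqP; rewrite curr_edge_eq_e1 ?bn.
  by move=> /=; lia.
- have -> : curr_edge (bits n) (pos n) = e0 (pos n).
    by apply/eqP; rewrite curr_edge_eq_e0 ?bn.
  by move=> /=; lia.
Qed.

Lemma profile_le_solution n e : prof n e <= x e.
Proof.
elim: n e => [|n IH] e; first by rewrite profileE big_ord0.
rewrite profileS; case: (eqVneq (pos n) d) => [|nd]; first by move=> ->; rewrite addn0.
case: (eqVneq (curr_edge (bits n) (pos n)) e) => [<-|]; last by rewrite andbF addn0.
rewrite andbT addn1 ltn_neqAle IH andbT; apply/eqP => /out_solution_le_departures out_le.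
have in_ge : arrivals n (pos n) <= \sum_(e | (val e).2 == pos n) x e.
  by rewrite -profile_in; apply: leq_sum => e' _.
have := x_sol.1 (pos n); rewrite /net_out (negbTE nd).
have := departures_arrivals n (pos n); rewrite eqxx [o == _]eq_sym.
set x_out := \sum_(e | _) x e in out_le *; set x_in := \sum_(e | _) x e in in_ge *.
by case: eqP => _ /= ? ?; lia.
Qed.

Lemma Sigma_profile_le_solution n : Sigma (prof n) <= Sigma x.
Proof. by apply: leq_sum => e _; apply: profile_le_solution. Qed.

End Dominated.

Lemma run_terminates_within x : is_solution x -> pos (Sigma x).+1 = d.
Proof.
move=> x_sol; apply/eqP/negPn/negP => running.
have := Sigma_profile_le_solution x_sol (Sigma x).+1.
by rewrite Sigma_profile_running // ltnn.
Qed.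

Lemma profile_unique_min n : o != d -> pos n = d -> unique_min_solution V s0 s1 o d (prof n).
Proof.
move=> od nd; split; first exact: profile_solution.
move=> y y_sol; split; first exact: Sigma_profile_le_solution.
move=> eqS; apply/ffunP => e; symmetry.
exact: eq_from_sum_le (profile_le_solution y_sol n) eqS e.
Qed.

End Run.

Theorem theorem4 (V : finType) (s0 s1 : V -> V) (o d : V) :
  o != d ->
  (run_terminates V s0 s1 o d <-> exists x, is_solution V s0 s1 o d x) /\
  (forall n : nat, (state_at V s0 s1 o d n).1 = d ->
     unique_min_solution V s0 s1 o d (profile V s0 s1 o d n)).
Proof.
move=> od; split; first split.
- by case=> n nd; exists (profile V s0 s1 o d n); apply: profile_solution.
- by case=> x x_sol; exists (Sigma V s0 s1 x).+1; apply: run_terminates_within x_sol.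
- by move=> n nd; apply: profile_unique_min.
Qed.
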